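(* Let $\sigma:\mathbb{R}\to\mathbb{R}$ be an increasing odd homeomorphism and let $U_\sigma=F_\sigma\circ F_\sigma$. If $p\in\Omega$ is $\sigma$-irrational, then $\|U_\sigma^n(p)\|\leq 2^{-n}\|p\|$ for every $n\geq0$, where $\|(x,y)\|=|x|+|y|$.
   Context: $h_\sigma(x,y)=(x+\sigma^{-1}(y),y)$, $v_\sigma(x,y)=(x,\sigma(x)+y)$, $\Omega=\mathbb{R}^2\setminus\{(0,0)\}$, $X=\{(x,y)\in\Omega:xy\geq0,\ x\neq0\}$, $Y=\{(x,y)\in\Omega:xy\leq0,\ y\neq0\}$, $A=h_\sigma(X)$, $B=v_\sigma(X)$, $C=h_\sigma^{-1}(Y)$, $D=v_\sigma^{-1}(Y)$. The accelerated Euclidean algorithm $F_\sigma$ is defined as follows: if $p\in A$, $F_\sigma(p)=h_\sigma^{-n}(p)$ with $n$ the smallest integer such that $h_\sigma^{-n}(p)\in B$; if $p\in B$, $F_\sigma(p)=v_\sigma^{-n}(p)$ with $n$ the smallest integer such that $v_\sigma^{-n}(p)\in A$; on $Y$ by the analogous formulas (if $p\in C$, $F_\sigma(p)=h_\sigma^{n}(p)$ with $n$ smallest such that $h_\sigma^n(p)\in D$; if $p\in D$, $F_\sigma(p)=v_\sigma^{n}(p)$ with $n$ smallest such that $v_\sigma^n(p)\in C$). The $\sigma$-rational lines are the axes $Ox,Oy$, the sets $m(Ox)$ with $m$ in the monoid generated by $h_\sigma,v_\sigma$, and the sets $m(Oy)$ with $m$ in the monoid generated by $h_\sigma^{-1},v_\sigma^{-1}$;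 a point is $\sigma$-irrational if it lies on none of them. *)

From Stdlib Require Import Reals Lra ClassicalEpsilon List.
Open Scope R_scope.

Definition pt := (R * R)%type.

Section Dyn.
Variables (sigma sigmainv : R -> R).

Definition hmap (p : pt) : pt := (fst p + sigmainv (snd p), snd p).
Definition hinv (p : pt) : pt := (fst p - sigmainv (snd p), snd p).
Definition vmap (p : pt) : pt := (fst p, sigma (fst p) + snd p).
Definition vinv (p : pt) : pt := (fst p, snd p - sigma (fst p)).

Definition Omega (p : pt) : Prop := p <> (0, 0).
Definition Xset (p : pt) : Prop := Omega p /\ fst p * snd p >= 0 /\ fst p <> 0.
Definition Yset (p : pt) : Prop := Omega p /\ fst p * snd p <= 0 /\ snd p <> 0.

Definition img (f : pt -> pt) (S : pt -> Prop) (p : pt) : Prop :=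
  exists q, S q /\ p = f q.

Definition Aset := img hmap Xset.
Definition Bset := img vmap Xset.
Definition Cset := img hinv Yset.
Definition Dset := img vinv Yset.

Definition first_hit (f : pt -> pt) (P : pt -> Prop) (p : pt) (n : nat) : Prop :=
  P (Nat.iter n f p) /\ forall m, (m < n)%nat -> ~ P (Nat.iter m f p).

(* f^n(p) for that smallest n (an unspecified point if no such n exists) *)
Definition iterate_until (f : pt -> pt) (P : pt -> Prop) (p : pt) : pt :=
  epsilon (inhabits p) (fun q => exists n, first_hit f P p n /\ q = Nat.iter n f p).

(* the accelerated Euclidean algorithm F_sigma (A,B,C,D are pairwise disjoint);
   outside A u B u C u D it is left unspecified (identity) *)
Definition Fsigma (p : pt) : pt :=
  if excluded_middle_informative (Aset p) then iterate_until hinv Bset p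
  else if excluded_middle_informative (Bset p) then iterate_until vinv Aset p
  else if excluded_middle_informative (Cset p) then iterate_until hmap Dset p
  else if excluded_middle_informative (Dset p) then iterate_until vmap Cset p
  else p.

Definition Usigma (p : pt) : pt := Fsigma (Fsigma p).

Definition Ox (p : pt) : Prop := snd p = 0.
Definition Oy (p : pt) : Prop := fst p = 0.

(* an element of the monoid generated by f and g: a finite composition (word) *)
Definition apply_word (f g : pt -> pt) (w : list bool) (p : pt) : pt :=
  fold_right (fun (b : bool) (q : pt) => if b then f q else g q) p w.

Definition sigma_rational (p : pt) : Prop :=
  Ox p \/ Oy p \/
  (exists w, img (apply_word hmap vmap w) Ox p) \/
  (exists w, img (apply_word hinv vinv w) Oy p).

Definition sigma_irrational (p : pt) : Prop := ~ sigma_rational p.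

End Dyn.

Definition norm1 (p : pt) : R := Rabs (fst p) + Rabs (snd p).

Definition inc_odd_homeo (sigma sigmainv : R -> R) : Prop :=
  (forall x y, x < y -> sigma x < sigma y) /\
  (forall x, sigma (- x) = - sigma x) /\
  (forall x, sigmainv (sigma x) = x) /\
  (forall y, sigma (sigmainv y) = y) /\
  continuity sigma /\ continuity sigmainv.

(** For fixed [y] put [s = σ⁻¹(y)].  For [s > 0] the regions [A], [B], [D], [C]
    are the parts [x > s], [0 < x ≤ s], [-s < x ≤ 0], [x ≤ -s] of the horizontal
    line (mirrored for [s < 0]; for [s = 0] only [A] is nonempty), and similarly
    on vertical lines with [t = σ(x)].  Hence each branch of [F_σ] is a Euclidean
    division: a coordinate [z] lying beyond the step [s] is replaced by the
    remainder [z - n s], [n ≥ 1], between [0] and [s], which is at most [|z|/2].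
    [U_σ] makes one horizontal and one vertical step, so it halves both
    coordinates.  A step vanishes only on an axis; since every orbit point [c]
    satisfies [p = w(c)] for a word [w] in [h_σ, v_σ] (on [A ∪ B]) or in their
    inverses (on [C ∪ D]), [σ]-irrationality of [p] keeps the orbit off the axes. *)

From Stdlib Require Import Reals Lra Lia List ClassicalEpsilon Classical Wf_nat.
Open Scope R_scope.

(* [z] lies on the closed segment from [0] to [s], resp. on the ray from [s] away from [0]. *)
Definition between (s z : R) : Prop := z * (s - z) >= 0.
Definition beyond (s z : R) : Prop := (z - s) * s >= 0.

Lemma between_opp s z : between (- s) (- z) <-> between s z.
Proof. unfold between. replace (- z * (- s - - z)) with (z * (s - z)) by ring. tauto. Qed.

Lemma exists_shift_into_window_pos s c : 0 < s -> c = 0 \/ c = s ->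
  forall N z, 0 < z <= INR N * s ->
  exists n, between s (z - INR n * s) /\ z - INR n * s <> c.
Proof.
  unfold between. intros Hs Hc N. induction N as [|N IH]; intros z Hz.
  - simpl in Hz. lra.
  - destruct (Rle_lt_dec z s) as [Hzs|Hzs].
    + destruct (Req_dec z c) as [->|Hzc].
      * exists 1%nat. simpl. destruct Hc as [-> | ->]; [lra|]. split; [nra|lra].
      * exists 0%nat. simpl. split; [nra|lra].
    + destruct (IH (z - s)) as [n Hn]; [rewrite S_INR in Hz; lra|].
      exists (S n). rewrite S_INR. replace (z - (INR n + 1) * s) with (z - s - INR n * s) by ring.
      exact Hn.
Qed.

Lemma exists_shift_into_window s z c : s <> 0 -> 0 < z * s -> c = 0 \/ c = s ->
  exists n, between s (z - INR n * s) /\ z - INR n * s <> c.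
Proof.
  intros Hs Hzs Hc. destruct (Rlt_or_le 0 s) as [Hpos|Hneg].
  - destruct (INR_archimed s z Hpos) as [N HN].
    apply (exists_shift_into_window_pos s c Hpos Hc N). nra.
  - assert (Hpos : 0 < - s) by lra.
    destruct (INR_archimed (- s) (- z) Hpos) as [N HN].
    destruct (exists_shift_into_window_pos (- s) (- c) Hpos ltac:(lra) N (- z))
      as [n [Hb Hc']]; [nra|].
    exists n. replace (- z - INR n * - s) with (- (z - INR n * s)) in * by ring.
    rewrite between_opp in Hb. split; [exact Hb | lra].
Qed.

Lemma remainder_le_half s z n : s <> 0 -> beyond s z -> 1 <= INR n ->
  between s (z - INR n * s) -> Rabs (z - INR n * s) <= Rabs z / 2.
Proof.
  unfold beyond, between. intros Hs Hz Hn Hw.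
  destruct (Rtotal_order s 0) as [h|[h|h]]; [|lra|].
  - assert (INR n * s <= s) by nra. assert (z - INR n * s <= 0) by nra.
    rewrite !Rabs_left1 by nra. nra.
  - assert (INR n * s >= s) by nra. assert (z - INR n * s >= 0) by nra.
    rewrite !Rabs_right by nra. nra.
Qed.

Lemma iterate_until_spec f P q : (exists n, P (Nat.iter n f q)) ->
  exists n, P (Nat.iter n f q) /\ iterate_until f P q = Nat.iter n f q.
Proof.
  intros Hex.
  destruct (dec_inh_nat_subset_has_unique_least_element (fun n => P (Nat.iter n f q))
              (fun n => classic _) Hex) as [n0 [[Hn0 Hleast] _]].
  assert (Hfirst : first_hit f P q n0).
  { split; [exact Hn0|]. intros m Hm HPm. specialize (Hleast m HPm). lia. }
  unfold iterate_until.
  destruct (epsilon_spec (inhabits q) (fun r => exists n, first_hit f P q n /\ r = Nat.iter n f q))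
    as [n [[HPn _] E]]; [eauto|].
  eauto.
Qed.

(* Each branch of [F_σ] has this shape, [z] being the moving coordinate and [s] its step. *)
Lemma iterate_until_halves f P q z s c :
  s <> 0 -> beyond s z -> c = 0 \/ c = s -> ~ P q ->
  (forall n, P (Nat.iter n f q) <-> between s (z - INR n * s) /\ z - INR n * s <> c) ->
  exists n, iterate_until f P q = Nat.iter n f q /\ P (Nat.iter n f q) /\
            Rabs (z - INR n * s) <= Rabs z / 2.
Proof.
  intros Hs Hz Hc HPq HP.
  destruct (iterate_until_spec f P q) as [n [HPn E]].
  { destruct (exists_shift_into_window s z c Hs) as [n Hn]; [unfold beyond in Hz; nra | exact Hc |].
    exists n. apply HP, Hn. }
  exists n. split; [exact E|]. split; [exact HPn|].
  destruct n as [|n]; [contradiction|].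
  apply remainder_le_half; [exact Hs | exact Hz | rewrite S_INR; pose proof (pos_INR n); lra |].
  apply HP, HPn.
Qed.

Section Words.
Variables f g : pt -> pt.

Definition reaches (c c' : pt) : Prop := exists w, c = apply_word f g w c'.

Lemma reaches_trans c c' c'' : reaches c c' -> reaches c' c'' -> reaches c c''.
Proof.
  intros [w1 ->] [w2 ->]. exists (w1 ++ w2). unfold apply_word. now rewrite fold_right_app.
Qed.

Lemma reaches_iter_l n c : reaches (Nat.iter n f c) c.
Proof.
  exists (repeat true n). induction n as [|n IH]; simpl; [reflexivity|now rewrite IH].
Qed.

Lemma reaches_iter_r n c : reaches (Nat.iter n g c) c.
Proof.
  exists (repeat false n). induction n as [|n IH]; simpl; [reflexivity|now rewrite IH].
Qed.

End Words.

Lemma img_inv_iff (h h' : pt -> pt) (S : pt -> Prop) :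
  (forall q, h' (h q) = q) -> (forall q, h (h' q) = q) -> forall q, img h S q <-> S (h' q).
Proof.
  intros K1 K2 q. split.
  - intros [r [Sr ->]]. now rewrite K1.
  - intros Sq. exists (h' q). auto.
Qed.

Lemma Xset_iff a b : Xset (a, b) <-> a * b >= 0 /\ a <> 0.
Proof.
  unfold Xset, Omega; simpl. split; [tauto|]. intros [? ?]. repeat split; auto; congruence.
Qed.

Lemma Yset_iff a b : Yset (a, b) <-> a * b <= 0 /\ b <> 0.
Proof.
  unfold Yset, Omega; simpl. split; [tauto|]. intros [? ?]. repeat split; auto; congruence.
Qed.

Ltac pt_ring := intros [? ?]; unfold hmap, hinv, vmap, vinv; simpl; f_equal; ring.

Section Dynamics.
Variables sg sgi : R -> R.
Hypothesis sg_increasing : forall x y, x < y -> sg x < sg y.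
Hypothesis sg_odd : forall x, sg (- x) = - sg x.
Hypothesis sgiK : forall x, sgi (sg x) = x.
Hypothesis sgK : forall y, sg (sgi y) = y.

Lemma sg0 : sg 0 = 0.
Proof. pose proof (sg_odd 0) as H. rewrite Ropp_0 in H. lra. Qed.

Lemma sg_sub_sign z a b : z * (sg a - sg b) >= 0 <-> z * (a - b) >= 0.
Proof.
  destruct (total_order_T a b) as [[h | ->] | h].
  - pose proof (sg_increasing a b h). split; intro; nra.
  - split; intro; nra.
  - pose proof (sg_increasing b a h). split; intro; nra.
Qed.

Lemma sg_sub_sign_le z a b : z * (sg a - sg b) <= 0 <-> z * (a - b) <= 0.
Proof. pose proof (sg_sub_sign (- z) a b). split; intro; nra. Qed.

Lemma sg_inj a b : sg a = sg b <-> a = b.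
Proof.
  split; [|now intros ->]. intros E. now rewrite <- (sgiK a), <- (sgiK b), E.
Qed.

Lemma sgi_eq0 y : sgi y = 0 <-> y = 0.
Proof.
  split; intros E.
  - now rewrite <- (sgK y), E, sg0.
  - rewrite E, <- sg0 at 1. apply sgiK.
Qed.

Lemma Aset_iff x y : Aset sgi (x, y) <-> Xset (x - sgi y, y).
Proof. apply (img_inv_iff _ (hinv sgi)); pt_ring. Qed.
Lemma Bset_iff x y : Bset sg (x, y) <-> Xset (x, y - sg x).
Proof. apply (img_inv_iff _ (vinv sg)); pt_ring. Qed.
Lemma Cset_iff x y : Cset sgi (x, y) <-> Yset (x + sgi y, y).
Proof. apply (img_inv_iff _ (hmap sgi)); pt_ring. Qed.
Lemma Dset_iff x y : Dset sg (x, y) <-> Yset (x, sg x + y).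
Proof. apply (img_inv_iff _ (vmap sg)); pt_ring. Qed.

Lemma Aset_hline x y : Aset sgi (x, y) <-> beyond (sgi y) x /\ x <> sgi y.
Proof.
  rewrite Aset_iff, Xset_iff. unfold beyond. set (s := sgi y).
  assert (Hy : y = sg s - sg 0) by (unfold s; rewrite sgK, sg0; ring).
  pose proof (sg_sub_sign (x - s) s 0) as Hsign. rewrite <- Hy, Rminus_0_r in Hsign.
  split; intros [? ?]; split; try nra; lra.
Qed.

Lemma Bset_hline x y : Bset sg (x, y) <-> between (sgi y) x /\ x <> 0.
Proof.
  rewrite Bset_iff, Xset_iff. unfold between. set (s := sgi y).
  assert (Hy : y = sg s) by (unfold s; now rewrite sgK).
  rewrite Hy, sg_sub_sign. tauto.
Qed.

Lemma Cset_hline x y : Cset sgi (x, y) <-> beyond (sgi y) (- x) /\ sgi y <> 0.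
Proof.
  rewrite Cset_iff, Yset_iff. unfold beyond. pose proof (sgi_eq0 y) as Hs0. set (s := sgi y) in *.
  assert (Hy : y = sg s - sg 0) by (unfold s; rewrite sgK, sg0; ring).
  pose proof (sg_sub_sign_le (x + s) s 0) as Hsign. rewrite <- Hy, Rminus_0_r in Hsign.
  split; intros [? ?]; split; try nra; tauto.
Qed.

Lemma Dset_hline x y : Dset sg (x, y) <-> between (sgi y) (- x) /\ - x <> sgi y.
Proof.
  rewrite Dset_iff, Yset_iff. unfold between. set (s := sgi y).
  assert (Hy : sg x + y = sg x - sg (- s)) by (unfold s; rewrite sg_odd, sgK; ring).
  pose proof (sg_sub_sign_le x x (- s)) as Hsign. pose proof (sg_inj x (- s)) as Hinj.
  rewrite Hy. split; intros [? ?]; split; nra.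
Qed.

Lemma sg_neq0 x : sg x <> 0 <-> x <> 0.
Proof. pose proof (sg_inj x 0) as H. rewrite sg0 in H. tauto. Qed.

Lemma Bset_vline x y : Bset sg (x, y) <-> beyond (sg x) y /\ sg x <> 0.
Proof.
  rewrite Bset_iff, Xset_iff, sg_neq0. unfold beyond.
  pose proof (sg_sub_sign (y - sg x) x 0) as Hsign. rewrite sg0, !Rminus_0_r in Hsign.
  split; intros [? ?]; split; try nra; tauto.
Qed.

Lemma Aset_vline x y : Aset sgi (x, y) <-> between (sg x) y /\ y <> sg x.
Proof.
  rewrite Aset_iff, Xset_iff. unfold between. set (u := sgi y).
  assert (Hy : y = sg u) by (unfold u; now rewrite sgK).
  pose proof (sg_sub_sign y x u) as Hsign. pose proof (sg_inj x u) as Hinj.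
  rewrite <- Hy in Hsign, Hinj.
  split; intros [? ?]; split; nra.
Qed.

Lemma Dset_vline x y : Dset sg (x, y) <-> beyond (sg x) (- y) /\ - y <> sg x.
Proof.
  rewrite Dset_iff, Yset_iff. unfold beyond.
  pose proof (sg_sub_sign_le (sg x + y) x 0) as Hsign. rewrite sg0, !Rminus_0_r in Hsign.
  split; intros [? ?]; split; try nra; lra.
Qed.

Lemma Cset_vline x y : Cset sgi (x, y) <-> between (sg x) (- y) /\ - y <> 0.
Proof.
  rewrite Cset_iff, Yset_iff. unfold between. set (u := sgi y).
  assert (Hy : sg x + y = sg x - sg (- u)) by (unfold u; rewrite sg_odd, sgK; ring).
  pose proof (sg_sub_sign_le y x (- u)) as Hsign. rewrite <- Hy in Hsign.
  split; intros [? ?]; split; try nra; lra.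
Qed.

Lemma Aset_Bset_disjoint x y : Aset sgi (x, y) -> ~ Bset sg (x, y).
Proof. rewrite Aset_hline, Bset_hline. unfold beyond, between. intros [? ?] [? ?]. nra. Qed.

Lemma Aset_Cset_disjoint x y : Aset sgi (x, y) -> ~ Cset sgi (x, y).
Proof. rewrite Aset_hline, Cset_hline. unfold beyond. intros [? ?] [? ?]. nra. Qed.

Lemma Aset_Dset_disjoint x y : Aset sgi (x, y) -> ~ Dset sg (x, y).
Proof.
  rewrite Aset_hline, Dset_hline. unfold beyond, between. intros [? ?] [? ?].
  destruct (Rtotal_order (sgi y) 0) as [?|[?|?]]; nra.
Qed.

Lemma Bset_Cset_disjoint x y : Bset sg (x, y) -> ~ Cset sgi (x, y).
Proof.
  rewrite Bset_hline, Cset_hline. unfold beyond, between. intros [? ?] [? ?].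
  destruct (Rtotal_order (sgi y) 0) as [?|[?|?]]; nra.
Qed.

Lemma Bset_Dset_disjoint x y : Bset sg (x, y) -> ~ Dset sg (x, y).
Proof. rewrite Bset_hline, Dset_hline. unfold between. intros [? ?] [? ?]. nra. Qed.

Lemma Cset_Dset_disjoint x y : Cset sgi (x, y) -> ~ Dset sg (x, y).
Proof.
  rewrite Cset_hline, Dset_hline. unfold beyond, between. intros [? ?] [? ?].
  destruct (Rtotal_order (sgi y) 0) as [?|[?|?]]; nra.
Qed.

Lemma regions_cover x y : Omega (x, y) ->
  Aset sgi (x, y) \/ Bset sg (x, y) \/ Cset sgi (x, y) \/ Dset sg (x, y).
Proof.
  intros Hom. rewrite Aset_hline, Bset_hline, Cset_hline, Dset_hline. unfold beyond, between.
  pose proof (sgi_eq0 y) as Hs0. set (s := sgi y) in *.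
  destruct (Req_dec s 0) as [Hs|Hs].
  - left. assert (x <> 0) by (intros ->; apply Hom; f_equal; tauto). rewrite Hs. split; lra.
  - destruct (Rlt_or_le 0 s);
      [destruct (Rlt_or_le s x); [|destruct (Rlt_or_le 0 x); [|destruct (Rlt_or_le (- s) x)]]
      |destruct (Rlt_or_le x s); [|destruct (Rlt_or_le x 0); [|destruct (Rlt_or_le x (- s))]]];
      try (left; split; nra); try (right; left; split; nra);
      try (right; right; left; split; nra); right; right; right; split; nra.
Qed.

Lemma iter_hinv n x y : Nat.iter n (hinv sgi) (x, y) = (x - INR n * sgi y, y).
Proof.
  induction n as [|n IH]; [|rewrite Nat.iter_succ, IH, S_INR]; unfold hinv; simpl; f_equal; ring.
Qed.

Lemma iter_hmap n x y : Nat.iter n (hmap sgi) (x, y) = (x + INR n * sgi y, y).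
Proof.
  induction n as [|n IH]; [|rewrite Nat.iter_succ, IH, S_INR]; unfold hmap; simpl; f_equal; ring.
Qed.

Lemma iter_vinv n x y : Nat.iter n (vinv sg) (x, y) = (x, y - INR n * sg x).
Proof.
  induction n as [|n IH]; [|rewrite Nat.iter_succ, IH, S_INR]; unfold vinv; simpl; f_equal; ring.
Qed.

Lemma iter_vmap n x y : Nat.iter n (vmap sg) (x, y) = (x, y + INR n * sg x).
Proof.
  induction n as [|n IH]; [|rewrite Nat.iter_succ, IH, S_INR]; unfold vmap; simpl; f_equal; ring.
Qed.

Lemma Fsigma_A c : Aset sgi c -> Fsigma sg sgi c = iterate_until (hinv sgi) (Bset sg) c.
Proof.
  intros HA. unfold Fsigma.
  destruct excluded_middle_informative; [reflexivity|contradiction].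
Qed.

Lemma Fsigma_B x y : Bset sg (x, y) ->
  Fsigma sg sgi (x, y) = iterate_until (vinv sg) (Aset sgi) (x, y).
Proof.
  intros HB. unfold Fsigma.
  destruct excluded_middle_informative as [HA|_]; [now apply Aset_Bset_disjoint in HA|].
  destruct excluded_middle_informative; [reflexivity|contradiction].
Qed.

Lemma Fsigma_C x y : Cset sgi (x, y) ->
  Fsigma sg sgi (x, y) = iterate_until (hmap sgi) (Dset sg) (x, y).
Proof.
  intros HC. unfold Fsigma.
  destruct excluded_middle_informative as [HA|_]; [now apply Aset_Cset_disjoint in HA|].
  destruct excluded_middle_informative as [HB|_]; [now apply Bset_Cset_disjoint in HB|].
  destruct excluded_middle_informative; [reflexivity|contradiction].
Qed.

Lemma Fsigma_D x y : Dset sg (x, y) ->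
  Fsigma sg sgi (x, y) = iterate_until (vmap sg) (Cset sgi) (x, y).
Proof.
  intros HD. unfold Fsigma.
  destruct excluded_middle_informative as [HA|_]; [now apply Aset_Dset_disjoint in HA|].
  destruct excluded_middle_informative as [HB|_]; [now apply Bset_Dset_disjoint in HB|].
  destruct excluded_middle_informative as [HC|_]; [now apply Cset_Dset_disjoint in HC|].
  destruct excluded_middle_informative; [reflexivity|contradiction].
Qed.

Lemma Fsigma_on_A x y : Aset sgi (x, y) -> y <> 0 ->
  exists x', Fsigma sg sgi (x, y) = (x', y) /\ Bset sg (x', y) /\
    Rabs x' <= Rabs x / 2 /\ reaches (hmap sgi) (vmap sg) (x, y) (x', y).
Proof.
  intros HA Hy. pose proof HA as HA'. rewrite Aset_hline in HA'.
  destruct (iterate_until_halves (hinv sgi) (Bset sg) (x, y) x (sgi y) 0) as [n [E [HB Hhalf]]].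
  - now rewrite sgi_eq0.
  - apply HA'.
  - now left.
  - now apply Aset_Bset_disjoint.
  - intros n. now rewrite iter_hinv, Bset_hline.
  - rewrite iter_hinv in E, HB. exists (x - INR n * sgi y).
    rewrite Fsigma_A by exact HA. repeat split; try assumption.
    replace (x, y) with (Nat.iter n (hmap sgi) (x - INR n * sgi y, y)) at 1
      by (rewrite iter_hmap; f_equal; ring).
    apply reaches_iter_l.
Qed.

Lemma Fsigma_on_B x y : Bset sg (x, y) ->
  exists y', Fsigma sg sgi (x, y) = (x, y') /\ Aset sgi (x, y') /\
    Rabs y' <= Rabs y / 2 /\ reaches (hmap sgi) (vmap sg) (x, y) (x, y').
Proof.
  intros HB. pose proof HB as HB'. rewrite Bset_vline in HB'.
  destruct (iterate_until_halves (vinv sg) (Aset sgi) (x, y) y (sg x) (sg x))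
    as [n [E [HA Hhalf]]].
  - apply HB'.
  - apply HB'.
  - now right.
  - intros HA. now apply Aset_Bset_disjoint in HA.
  - intros n. now rewrite iter_vinv, Aset_vline.
  - rewrite iter_vinv in E, HA. exists (y - INR n * sg x).
    rewrite Fsigma_B by exact HB. repeat split; try assumption.
    replace (x, y) with (Nat.iter n (vmap sg) (x, y - INR n * sg x)) at 1
      by (rewrite iter_vmap; f_equal; ring).
    apply reaches_iter_r.
Qed.

Lemma Fsigma_on_C x y : Cset sgi (x, y) ->
  exists x', Fsigma sg sgi (x, y) = (x', y) /\ Dset sg (x', y) /\
    Rabs x' <= Rabs x / 2 /\ reaches (hinv sgi) (vinv sg) (x, y) (x', y).
Proof.
  intros HC. pose proof HC as HC'. rewrite Cset_hline in HC'.
  destruct (iterate_until_halves (hmap sgi) (Dset sg) (x, y) (- x) (sgi y) (sgi y))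
    as [n [E [HD Hhalf]]].
  - apply HC'.
  - apply HC'.
  - now right.
  - intros HD. now apply Cset_Dset_disjoint in HD.
  - intros n. rewrite iter_hmap, Dset_hline.
    now replace (- (x + INR n * sgi y)) with (- x - INR n * sgi y) by ring.
  - rewrite iter_hmap in E, HD. exists (x + INR n * sgi y).
    rewrite Fsigma_C by exact HC. repeat split; try assumption.
    + rewrite <- Rabs_Ropp, <- (Rabs_Ropp x).
      now replace (- (x + INR n * sgi y)) with (- x - INR n * sgi y) by ring.
    + replace (x, y) with (Nat.iter n (hinv sgi) (x + INR n * sgi y, y)) at 1
        by (rewrite iter_hinv; f_equal; ring).
      apply reaches_iter_l.
Qed.

Lemma Fsigma_on_D x y : Dset sg (x, y) -> x <> 0 ->
  exists y', Fsigma sg sgi (x, y) = (x, y') /\ Cset sgi (x, y') /\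
    Rabs y' <= Rabs y / 2 /\ reaches (hinv sgi) (vinv sg) (x, y) (x, y').
Proof.
  intros HD Hx. pose proof HD as HD'. rewrite Dset_vline in HD'.
  destruct (iterate_until_halves (vmap sg) (Cset sgi) (x, y) (- y) (sg x) 0)
    as [n [E [HC Hhalf]]].
  - now rewrite sg_neq0.
  - apply HD'.
  - now left.
  - intros HC. now apply Cset_Dset_disjoint in HC.
  - intros n. rewrite iter_vmap, Cset_vline.
    now replace (- (y + INR n * sg x)) with (- y - INR n * sg x) by ring.
  - rewrite iter_vmap in E, HC. exists (y + INR n * sg x).
    rewrite Fsigma_D by exact HD. repeat split; try assumption.
    + rewrite <- Rabs_Ropp, <- (Rabs_Ropp y).
      now replace (- (y + INR n * sg x)) with (- y - INR n * sg x) by ring.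
    + replace (x, y) with (Nat.iter n (vinv sg) (x, y + INR n * sg x)) at 1
        by (rewrite iter_vinv; f_equal; ring).
      apply reaches_iter_r.
Qed.

Section Orbit.
Variable p : pt.
Hypothesis p_irrational : sigma_irrational sg sgi p.

Definition AB_orbit (c : pt) : Prop :=
  (Aset sgi c \/ Bset sg c) /\ reaches (hmap sgi) (vmap sg) p c.

Definition CD_orbit (c : pt) : Prop :=
  (Cset sgi c \/ Dset sg c) /\ reaches (hinv sgi) (vinv sg) p c.

Lemma AB_orbit_snd_neq0 x y : AB_orbit (x, y) -> y <> 0.
Proof.
  intros [_ [w Hw]] Hy. apply p_irrational. right; right; left. now exists w, (x, y).
Qed.

Lemma CD_orbit_fst_neq0 x y : CD_orbit (x, y) -> x <> 0.
Proof.
  intros [_ [w Hw]] Hx. apply p_irrational. right; right; right. now exists w, (x, y).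
Qed.

Lemma Usigma_AB_orbit c : AB_orbit c ->
  AB_orbit (Usigma sg sgi c) /\ norm1 (Usigma sg sgi c) <= / 2 * norm1 c.
Proof.
  destruct c as [x y]. intros Hc. pose proof (AB_orbit_snd_neq0 x y Hc) as Hy.
  destruct Hc as [[HA|HB] Hreach].
  - destruct (Fsigma_on_A x y HA Hy) as [x' [E1 [HB [Hx' R1]]]].
    destruct (Fsigma_on_B x' y HB) as [y' [E2 [HA' [Hy' R2]]]].
    unfold Usigma. rewrite E1, E2. split.
    + split; [now left|]. eapply reaches_trans; [eassumption|]. eapply reaches_trans; eassumption.
    + unfold norm1; simpl. lra.
  - destruct (Fsigma_on_B x y HB) as [y' [E1 [HA [Hy' R1]]]].
    assert (Hc1 : AB_orbit (x, y')) by (split; [now left | eapply reaches_trans; eassumption]).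
    destruct (Fsigma_on_A x y' HA (AB_orbit_snd_neq0 x y' Hc1)) as [x' [E2 [HB' [Hx' R2]]]].
    unfold Usigma. rewrite E1, E2. split.
    + split; [now right|]. eapply reaches_trans; [apply Hc1|eassumption].
    + unfold norm1; simpl. lra.
Qed.

Lemma Usigma_CD_orbit c : CD_orbit c ->
  CD_orbit (Usigma sg sgi c) /\ norm1 (Usigma sg sgi c) <= / 2 * norm1 c.
Proof.
  destruct c as [x y]. intros Hc. pose proof (CD_orbit_fst_neq0 x y Hc) as Hx.
  destruct Hc as [[HC|HD] Hreach].
  - destruct (Fsigma_on_C x y HC) as [x' [E1 [HD [Hx' R1]]]].
    assert (Hc1 : CD_orbit (x', y)) by (split; [now right | eapply reaches_trans; eassumption]).
    destruct (Fsigma_on_D x' y HD (CD_orbit_fst_neq0 x' y Hc1)) as [y' [E2 [HC' [Hy' R2]]]].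
    unfold Usigma. rewrite E1, E2. split.
    + split; [now left|]. eapply reaches_trans; [apply Hc1|eassumption].
    + unfold norm1; simpl. lra.
  - destruct (Fsigma_on_D x y HD Hx) as [y' [E1 [HC [Hy' R1]]]].
    destruct (Fsigma_on_C x y' HC) as [x' [E2 [HD' [Hx' R2]]]].
    unfold Usigma. rewrite E1, E2. split.
    + split; [now right|]. eapply reaches_trans; [eassumption|]. eapply reaches_trans; eassumption.
    + unfold norm1; simpl. lra.
Qed.

Lemma orbit_start : Omega p -> AB_orbit p \/ CD_orbit p.
Proof.
  intros Hom. rewrite (surjective_pairing p) in Hom.
  assert (Hrefl : forall f g, reaches f g p p) by (intros f g; now exists nil).
  destruct (regions_cover _ _ Hom) as [H|[H|[H|H]]]; rewrite <- surjective_pairing in H;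
    [left|left|right|right]; split; auto.
Qed.

Lemma Usigma_iter_halves : Omega p -> forall n,
  (AB_orbit (Nat.iter n (Usigma sg sgi) p) \/ CD_orbit (Nat.iter n (Usigma sg sgi) p)) /\
  norm1 (Nat.iter n (Usigma sg sgi) p) <= (/ 2) ^ n * norm1 p.
Proof.
  intros Hom n. induction n as [|n [Horbit Hnorm]].
  - simpl. split; [now apply orbit_start | lra].
  - simpl. destruct Horbit as [H|H];
      [destruct (Usigma_AB_orbit _ H) as [H' Hhalf] | destruct (Usigma_CD_orbit _ H) as [H' Hhalf]];
      (split; [auto | nra]).
Qed.

End Orbit.
End Dynamics.

Theorem lemma3 (sigma sigmainv : R -> R) (Hs : inc_odd_homeo sigma sigmainv)
  (p : pt) (Hp : Omega p) (Hirr : sigma_irrational sigma sigmainv p) :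
  forall n : nat,
    norm1 (Nat.iter n (Usigma sigma sigmainv) p) <= (/ 2) ^ n * norm1 p.
Proof.
  destruct Hs as [Hmono [Hodd [Hli [Hri _]]]].
  intros n. exact (proj2 (Usigma_iter_halves sigma sigmainv Hmono Hodd Hli Hri p Hirr Hp n)).
Qed.
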